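(* Let $R$ be a commutative ring and $M$ a $w$-FP-projective $R$-module such that $\mathrm{Ext}^1_R(M,G)=0$ for every $GV$-torsion-free $R$-module $G$. Then $M$ is projective.
   Context: A $GV$-ideal of $R$ is a finitely generated ideal $J$ such that the natural map $R\to\mathrm{Hom}_R(J,R)$ is an isomorphism; $GV(R)$ is the set of $GV$-ideals. For an $R$-module $X$, $\mathrm{tor}_{GV}(X)=\{x\in X: Jx=0\text{ for some }J\in GV(R)\}$; $X$ is $GV$-torsion if $\mathrm{tor}_{GV}(X)=X$ and $GV$-torsion-free if $\mathrm{tor}_{GV}(X)=0$. An $R$-module $A$ is absolutely $w$-pure if $\mathrm{Ext}^1_R(N,A)$ is $GV$-torsion for every finitely presented $R$-module $N$. An $R$-module $M$ is $w$-FP-projective if $\mathrm{Ext}^1_R(M,A)=0$ for every absolutely $w$-pure $R$-module $A$. *)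

From HB Require Import structures.
From mathcomp Require Import all_boot all_order all_algebra.
Set Implicit Arguments. Unset Strict Implicit. Unset Printing Implicit Defensive.
Import GRing.Theory.
Local Open Scope ring_scope.

Section WDefs.
Variable R : comPzRingType.

Definition ideal_span (s : seq R) (x : R) : Prop :=
  exists c : 'I_(size s) -> R, x = \sum_(i < size s) c i * s`_i.

(* GV-ideal: finitely generated ideal J such that the natural map
   R -> Hom_R(J,R), r |-> (x |-> r x), is bijective.  Hom_R(J,R) is
   represented by functions R -> R that are R-linear on J. *)
Definition isGV (J : R -> Prop) : Prop :=
  exists s : seq R,
    (forall x, J x <-> ideal_span s x) /\
    (forall r, (forall x, J x -> r * x = 0) -> r = 0) /\
    (forall phi : R -> R,
       (forall a x y, J x -> J y -> phi (a * x + y) = a * phi x + phi y) ->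
       exists r, forall x, J x -> phi x = r * x).

Definition GV_torsion_elt (X : lmodType R) (x : X) : Prop :=
  exists J, isGV J /\ forall r, J r -> r *: x = 0.

Definition GV_torsion_free (X : lmodType R) : Prop :=
  forall x : X, GV_torsion_elt x -> x = 0.

Definition ses (A E N : lmodType R) (i : {linear A -> E}) (p : {linear E -> N}) : Prop :=
  injective i /\ (forall n, exists e, p e = n) /\
  (forall e, p e = 0 <-> exists a, i a = e).

(* Ext^1_R(N,A) = 0 (Yoneda): every extension of N by A splits. *)
Definition Ext1_zero (N A : lmodType R) : Prop :=
  forall (E : lmodType R) (i : {linear A -> E}) (p : {linear E -> N}),
    ses i p -> exists s : {linear N -> E}, forall n, p (s n) = n.

(* Ext^1_R(N,A) is GV-torsion (Yoneda): for each extension class xi there is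
   J in GV(R) with r xi = 0 for all r in J; r xi is the pullback of xi along
   multiplication by r on N, which splits iff r id_N lifts to E. *)
Definition Ext1_GV_torsion (N A : lmodType R) : Prop :=
  forall (E : lmodType R) (i : {linear A -> E}) (p : {linear E -> N}),
    ses i p ->
    exists J, isGV J /\
      forall r, J r -> exists s : {linear N -> E}, forall n, p (s n) = r *: n.

Definition finitely_presented (N : lmodType R) : Prop :=
  exists (n : nat) (f : {linear 'rV[R]_n -> N}) (gens : seq 'rV[R]_n),
    (forall x, exists v, f v = x) /\
    (forall v, f v = 0 <->
       exists c : 'I_(size gens) -> R, v = \sum_(i < size gens) c i *: gens`_i).

Definition absolutely_w_pure (A : lmodType R) : Prop :=
  forall N : lmodType R, finitely_presented N -> Ext1_GV_torsion N A.

Definition w_FP_projective (M : lmodType R) : Prop :=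
  forall A : lmodType R, absolutely_w_pure A -> Ext1_zero M A.

Definition projective_module (M : lmodType R) : Prop :=
  forall (B C : lmodType R) (g : {linear B -> C}) (f : {linear M -> C}),
    (forall c, exists b, g b = c) ->
    exists h : {linear M -> B}, forall m, g (h m) = f m.

End WDefs.

(* Let 0 -> K -> E -> M -> 0 be an extension and T the GV-torsion submodule of K.
   A product of two GV-ideals contains a GV-ideal (it is generated by the products
   of generators, and homomorphisms out of it are handled one factor at a time), so
   T is a submodule and K/T is GV-torsion-free.  A GV-torsion module is absolutely
   w-pure: lifting a finite presentation of N to E, the finitely many relations are
   sent into the torsion kernel, so a single GV-ideal J kills them and r times the
   lift descends to N for every r in J.  Hence Ext^1(M, T) = 0 = Ext^1(M, K/T); the
   extension is split first modulo T and then, by pulling back along that splitting,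
   outright.  So every epimorphism onto M splits and M is projective. *)

From HB Require Import structures.
From mathcomp Require Import all_boot all_order all_algebra.
From mathcomp Require Import boolp.
Set Implicit Arguments. Unset Strict Implicit. Unset Printing Implicit Defensive.
Import GRing.Theory.
Local Open Scope ring_scope.
Local Open Scope quotient_scope.

Definition lin_pack (R : pzRingType) (U V : lmodType R) (f : U -> V) (fL : linear f)
  : {linear U -> V} := HB.pack f (GRing.isLinear.Build R U V *:%R f fL).

Section Submodule.
Variables (R : pzRingType) (V : lmodType R) (S : submodClosed V).

Record submod := Submod { submod_val : V; _ : submod_val \in S }.
HB.instance Definition _ := [isSub for submod_val].
HB.instance Definition _ := [Choice of submod by <:].
HB.instance Definition _ := [SubChoice_isSubLmodule of submod by <:].

End Submodule.

Section QuotientModule.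
Variables (R : pzRingType) (V : lmodType R) (S : submodClosed V).

Lemma submod_zmod_closed : zmod_closed S.
Proof. exact: GRing.submod_closedB (submodClosedP S). Qed.

Definition submod_zmodClosed : zmodClosed V :=
  HB.pack_for (zmodClosed V) (S : {pred V})
    (GRing.isZmodClosed.Build V (S : {pred V}) submod_zmod_closed).

Definition quotmod : Type := Quotient.quot submod_zmodClosed.
HB.instance Definition _ := GRing.Zmodule.on quotmod.
HB.instance Definition _ := EqQuotient.on quotmod.

Lemma quotmod_eqE (x y : V) : (x == y %[mod quotmod]) = (x - y \in S).
Proof. by rewrite piE. Qed.

Definition scaleq (a : R) := lift_op1 quotmod ( *:%R a).

Lemma pi_scale a : {morph \pi_quotmod : x / a *: x >-> scaleq a x}.
Proof.
move=> x; unlock scaleq; apply/eqP; rewrite quotmod_eqE -scalerBr rpredZ //.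
by rewrite -quotmod_eqE reprK.
Qed.
Canonical pi_scale_morph a := PiMorph1 (pi_scale a).

Lemma scaleqA a b (u : quotmod) : scaleq a (scaleq b u) = scaleq (a * b) u.
Proof. by rewrite -[u]reprK !piE scalerA. Qed.
Lemma scaleq1 : left_id 1 scaleq.
Proof. by move=> u; rewrite -[u]reprK !piE scale1r. Qed.
Lemma scaleqDr : right_distributive scaleq +%R.
Proof. by move=> a u v; rewrite -[u]reprK -[v]reprK !piE scalerDr. Qed.
Lemma scaleqDl (u : quotmod) : {morph scaleq^~ u : a b / a + b}.
Proof. by move=> a b; rewrite -[u]reprK !piE scalerDl. Qed.
HB.instance Definition _ :=
  GRing.Zmodule_isLmodule.Build R quotmod scaleqA scaleq1 scaleqDr scaleqDl.

Lemma pi_is_linear : linear \pi_quotmod.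
Proof. by move=> a x y; rewrite !piE. Qed.
HB.instance Definition _ :=
  GRing.isLinear.Build R V quotmod _ \pi_quotmod pi_is_linear.

Lemma pi_eq0 x : (\pi_quotmod x == 0) = (x \in S).
Proof. by rewrite -(raddf0 \pi_quotmod) quotmod_eqE subr0. Qed.

Lemma pi_surj (q : quotmod) : exists x, \pi_quotmod x = q.
Proof. by exists (repr q); rewrite reprK. Qed.

End QuotientModule.

Section KernelImage.
Variables (R : pzRingType) (U V : lmodType R) (f : {linear U -> V}).

Definition kerm : {pred U} := [pred x | f x == 0].

Lemma kerm_closed : subsemimod_closed kerm.
Proof.
split; first by split=> [|x y]; rewrite !inE ?linear0 // linearD => /eqP-> /eqP->; rewrite addr0.
by move=> a x; rewrite !inE linearZ_LR => /eqP->; rewrite scaler0.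
Qed.
HB.instance Definition _ := GRing.isSubmodClosed.Build R U kerm kerm_closed.

Variable S : submodClosed U.

Definition submod_img : {pred V} := [pred y | `[< exists2 x, x \in S & f x = y >]].

Lemma submod_img_closed : subsemimod_closed submod_img.
Proof.
split; first split.
- by apply/asboolP; exists 0; rewrite ?rpred0 ?linear0.
- move=> _ _ /asboolP[x Sx <-] /asboolP[y Sy <-].
  by apply/asboolP; exists (x + y); rewrite ?rpredD ?linearD.
- move=> a _ /asboolP[x Sx <-]; apply/asboolP; exists (a *: x); rewrite ?rpredZ //.
  exact: linearZ_LR.
Qed.
HB.instance Definition _ := GRing.isSubmodClosed.Build R V submod_img submod_img_closed.

Lemma mem_submod_img_inj x : injective f -> (f x \in submod_img) = (x \in S).
Proof.
move=> f_inj; apply/asboolP/idP => [[y Sy /f_inj <-] // | Sx].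
by exists x.
Qed.

End KernelImage.

Lemma linear_factor (R : pzRingType) (U N W : lmodType R)
    (f : {linear U -> N}) (h : {linear U -> W}) :
  (forall n, exists u, f u = n) -> (forall u, f u = 0 -> h u = 0) ->
  exists s : {linear N -> W}, forall u, s (f u) = h u.
Proof.
move=> f_surj hf; have [g gK] := choice f_surj.
have hE u : h (g (f u)) = h u.
  by apply/eqP; rewrite -subr_eq0 -linearB hf // linearB gK subrr.
have sL : linear (h \o g).
  by move=> a x y; rewrite /= -[x]gK -[y]gK -linearP !hE linearP.
by exists (lin_pack sL) => u; apply: hE.
Qed.

Section GVIdeals.
Variable R : comPzRingType.
Implicit Types (s : seq R) (J Q : R -> Prop).

Definition is_ideal Q := Q 0 /\ forall a x y, Q x -> Q y -> Q (a * x + y).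

(* [GV_torsion_elt x] is [contains_GV (fun r => r *: x = 0)] by conversion. *)
Definition contains_GV Q := exists J : R -> Prop, isGV J /\ forall r, J r -> Q r.

Lemma ideal_span_ideal s : is_ideal (ideal_span s).
Proof.
split; first by exists (fun=> 0); rewrite big1 // => i _; rewrite mul0r.
move=> a _ _ [c ->] [d ->]; exists (fun i => a * c i + d i).
rewrite mulr_sumr -big_split /=; apply: eq_bigr => i _.
by rewrite mulrDl mulrA.
Qed.

Lemma ideal_span_nth s (i : 'I_(size s)) : ideal_span s s`_i.
Proof.
exists (fun j => (j == i)%:R).
by rewrite (bigD1 i) //= eqxx mul1r big1 ?addr0 // => j /negbTE->; rewrite mul0r.
Qed.

Lemma ideal_span_mem s u : u \in s -> ideal_span s u.
Proof.
move=> us; have lt_us : (index u s < size s)%N by rewrite index_mem.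
by have := ideal_span_nth (Ordinal lt_us); rewrite /= nth_index.
Qed.

Lemma ideal_span_min s Q :
  is_ideal Q -> (forall u, u \in s -> Q u) -> forall x, ideal_span s x -> Q x.
Proof.
move=> [Q0 Qlin] Qs x [c ->]; apply: (big_ind Q) => //.
  by move=> y z Qy Qz; have := Qlin 1 y z Qy Qz; rewrite mul1r.
by move=> i _; have := Qlin (c i) _ 0 (Qs _ (mem_nth 0 (ltn_ord i))) Q0; rewrite addr0.
Qed.

Lemma isGV_ideal J : isGV J -> is_ideal J.
Proof.
move=> [s [Js _]]; have [span0 spanlin] := ideal_span_ideal s.
by split=> [|a x y /Js Jx /Js Jy]; apply/Js => //; apply: spanlin.
Qed.

Lemma ideal_hom0 J (phi : R -> R) : J 0 ->
  (forall a x y, J x -> J y -> phi (a * x + y) = a * phi x + phi y) -> phi 0 = 0.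
Proof.
move=> J0 phi_lin; have := phi_lin 1 0 0 J0 J0; rewrite !mul1r addr0 => phi00.
by apply: (addrI (phi 0)); rewrite addr0 -phi00.
Qed.

Lemma isGV_full : isGV (fun _ : R => True).
Proof.
exists [:: 1]; split; [|split].
- by move=> x; split=> // _; exists (fun=> x); rewrite big_ord1 /= mulr1.
- by move=> r /(_ 1 I); rewrite mulr1.
- move=> phi phi_lin; exists (phi 1) => x _.
  have := phi_lin x 1 0 I I.
  by rewrite mulr1 addr0 (ideal_hom0 I phi_lin) addr0 mulrC.
Qed.

Section GVProduct.
Variables (J1 J2 : R -> Prop) (s t : seq R).
Hypotheses (J1s : forall x, J1 x <-> ideal_span s x) (J2t : forall x, J2 x <-> ideal_span t x).
Hypotheses (GV1 : isGV J1) (GV2 : isGV J2).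
Local Notation J := (ideal_span [seq a * b | a <- s, b <- t]).

Lemma ideal_span_allpairs_mul a b : J1 a -> J2 b -> J (a * b).
Proof.
have [_ Jlin] := ideal_span_ideal [seq a * b | a <- s, b <- t].
have J0 : J 0 by case: (ideal_span_ideal [seq a * b | a <- s, b <- t]).
move=> /J1s Ja /J2t Jb; move: a Ja b Jb.
apply: (@ideal_span_min _ (fun a => forall b, ideal_span t b -> J (a * b))).
- split=> [b _|c x y Jx Jy b Jb]; first by rewrite mul0r.
  by rewrite mulrDl -mulrA; apply: Jlin; [apply: Jx | apply: Jy].
move=> u us; apply: ideal_span_min => [|v vt].
  by split=> [|c x y Jx Jy]; rewrite ?mulr0 // mulrDr mulrCA; apply: Jlin.
by apply: ideal_span_mem; apply/allpairsP; exists (u, v).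
Qed.

Lemma isGV_allpairs_mul : isGV J.
Proof.
have [_ [_ [ann1 hom1]]] := GV1; have [_ [_ [ann2 hom2]]] := GV2.
have [J10 J1lin] := isGV_ideal GV1; have J_ideal := ideal_span_ideal [seq a * b | a <- s, b <- t].
exists [seq a * b | a <- s, b <- t]; split=> //; split.
  move=> r rJ; apply: ann1 => a J1a; apply: ann2 => b J2b.
  by rewrite -mulrA; apply/rJ/ideal_span_allpairs_mul.
move=> phi phi_lin.
have phi0 : phi 0 = 0 := ideal_hom0 J_ideal.1 phi_lin.
(* For a in J1, y |-> phi (a * y) is multiplication by some [ra a] on J2; then
   [ra] is J1-linear, hence itself multiplication by some r0. *)
have /choice[ra raP] : forall a, exists r, J1 a -> forall y, J2 y -> phi (a * y) = r * y.
  move=> a; have [J1a|] := pselect (J1 a); last by exists 0.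
  have [r rP] : exists r, forall y, J2 y -> phi (a * y) = r * y.
    apply: hom2 => c x y J2x J2y; rewrite mulrDr mulrCA phi_lin //;
    exact: ideal_span_allpairs_mul.
  by exists r.
have ra_lin c x y : J1 x -> J1 y -> ra (c * x + y) = c * ra x + ra y.
  move=> J1x J1y; have J1xy := J1lin c x y J1x J1y.
  apply/eqP; rewrite -subr_eq0; apply/eqP/ann2 => z J2z.
  rewrite mulrBl mulrDl -mulrA -!raP // mulrDl -mulrA phi_lin ?subrr //;
  exact: ideal_span_allpairs_mul.
have [r0 r0P] := hom1 ra ra_lin; exists r0 => x Jx.
suff [] : J x /\ phi x = r0 * x by [].
move: x Jx; apply: ideal_span_min.
  split=> [|a x y [Jx ex] [Jy ey]]; first by rewrite phi0 mulr0; split=> //; apply: J_ideal.1.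
  by split; [apply: J_ideal.2 | rewrite phi_lin // ex ey mulrDr mulrCA].
move=> _ /allpairsP[[a b] /= [sa tb ->]].
have [J1a J2b] : J1 a /\ J2 b by split; [apply/J1s/ideal_span_mem | apply/J2t/ideal_span_mem].
by split; [apply: ideal_span_allpairs_mul | rewrite raP // r0P // mulrA].
Qed.

End GVProduct.

Lemma contains_GV_mul J1 J2 Q : isGV J1 -> isGV J2 -> is_ideal Q ->
  (forall a b, J1 a -> J2 b -> Q (a * b)) -> contains_GV Q.
Proof.
move=> GV1 GV2 Q_ideal QJ12; have [s [J1s _]] := GV1; have [t [J2t _]] := GV2.
exists (ideal_span [seq a * b | a <- s, b <- t]).
split; first exact: isGV_allpairs_mul J1s J2t GV1 GV2.
apply: ideal_span_min => // _ /allpairsP[[a b] /= [sa tb ->]].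
by apply: QJ12; [apply/J1s/ideal_span_mem | apply/J2t/ideal_span_mem].
Qed.

Lemma contains_GVI Q1 Q2 :
  contains_GV Q1 -> contains_GV Q2 -> contains_GV (fun r => Q1 r /\ Q2 r).
Proof.
move=> [J1 [GV1 J1Q]] [J2 [GV2 J2Q]].
have [J10 J1lin] := isGV_ideal GV1; have [J20 J2lin] := isGV_ideal GV2.
have [J [GVJ JJ12]] : contains_GV (fun r => J1 r /\ J2 r).
  apply: contains_GV_mul GV1 GV2 _ _.
    by split=> // a x y [? ?] [? ?]; split; [apply: J1lin | apply: J2lin].
  move=> a b J1a J2b; split; last by have := J2lin a b 0 J2b J20; rewrite addr0.
  by have := J1lin b a 0 J1a J10; rewrite addr0 mulrC.
by exists J; split=> // r /JJ12[/J1Q ? /J2Q ?].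
Qed.

Lemma contains_GV_all n (Q : nat -> R -> Prop) :
  (forall i, (i < n)%N -> contains_GV (Q i)) ->
  contains_GV (fun r => forall i, (i < n)%N -> Q i r).
Proof.
elim: n => [|n IHn] GVQ; first by exists (fun=> True); split=> //; exact: isGV_full.
have [|J [GVJ JQ]] := contains_GVI (IHn _) (GVQ n (ltnSn n)).
  by move=> i lt_in; apply: GVQ; apply: ltnW.
exists J; split=> // r /JQ[Qr Qnr] i; rewrite ltnS leq_eqVlt => /predU1P[->|] //.
exact: Qr.
Qed.

End GVIdeals.

Section GVTorsion.
Variables (R : comPzRingType) (K : lmodType R).

Lemma annihilator_ideal (x : K) : is_ideal (fun r => r *: x = 0).
Proof.
split=> [|a r r' rx r'x]; first exact: scale0r.
by rewrite scalerDl -scalerA rx r'x scaler0 addr0.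
Qed.

Definition GV_tor : {pred K} := [pred x | `[< GV_torsion_elt x >]].

Lemma GV_tor_closed : subsemimod_closed GV_tor.
Proof.
split; first split.
- apply/asboolP; exists (fun=> True); split=> [|r _]; [exact: isGV_full | exact: scaler0].
- move=> x y /asboolP-tx /asboolP-ty; apply/asboolP.
  have [J [GVJ Jxy]] := contains_GVI tx ty.
  by exists J; split=> // r /Jxy[rx ry]; rewrite scalerDr rx ry addr0.
- move=> a x /asboolP[J [GVJ Jx]]; apply/asboolP; exists J; split=> // r Jr.
  by rewrite scalerA mulrC -scalerA Jx ?scaler0.
Qed.
HB.instance Definition _ := GRing.isSubmodClosed.Build R K GV_tor GV_tor_closed.

Lemma GV_torsion_elt_of_scale (x : K) :
  contains_GV (fun r => GV_torsion_elt (r *: x)) -> GV_torsion_elt x.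
Proof.
move=> [J [GVJ Jx]]; have [s [Js _]] := GVJ.
have [|J' [GVJ' J'x]] := @contains_GV_all _ (size s) (fun i r => r *: (s`_i *: x) = 0).
  by move=> i lt_is; apply: (Jx s`_i); apply/Js/(ideal_span_nth (Ordinal lt_is)).
apply: contains_GV_mul GVJ GVJ' (annihilator_ideal x) _ => a b /Js-sa J'b.
rewrite -scalerA; move: a sa; apply: ideal_span_min => [|u us].
  exact: annihilator_ideal.
have lt_us : (index u s < size s)%N by rewrite index_mem.
by have := J'x b J'b _ lt_us; rewrite nth_index // scalerA mulrC -scalerA.
Qed.

Lemma GV_torsion_free_quotmod : GV_torsion_free (quotmod GV_tor).
Proof.
move=> q; have [x <-] := pi_surj q; move=> [J [GVJ Jx]].
apply/eqP; rewrite pi_eq0; apply/asboolP/GV_torsion_elt_of_scale.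
exists J; split=> // r /Jx; rewrite -linearZ_LR => /eqP.
by rewrite pi_eq0 => /asboolP.
Qed.

Lemma GV_torsion_submod (t : submod GV_tor) : GV_torsion_elt t.
Proof.
have /asboolP[J [GVJ Jt]] := valP t.
by exists J; split=> // r Jr; apply: val_inj; rewrite linear0 linearZ_LR Jt.
Qed.

End GVTorsion.

Lemma rV_lift (R : pzRingType) n (E N : lmodType R)
    (p : {linear E -> N}) (f : {linear 'rV[R]_n -> N}) :
  (forall y, exists e, p e = y) -> exists L : {linear 'rV[R]_n -> E}, forall v, p (L v) = f v.
Proof.
move=> p_surj; have [e eP] := choice (fun j : 'I_n => p_surj (f (delta_mx 0 j))).
have L_lin : linear (fun v : 'rV[R]_n => \sum_(j < n) v 0 j *: e j).
  move=> a v w; rewrite scaler_sumr -big_split /=; apply: eq_bigr => j _.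
  by rewrite !mxE scalerDl scalerA.
exists (lin_pack L_lin) => v; rewrite [in RHS](row_sum_delta v) !linear_sum /=.
by apply: eq_bigr => j _; rewrite !linearZ_LR eP.
Qed.

Lemma GV_torsion_abs_w_pure (R : comPzRingType) (A : lmodType R) :
  (forall a : A, GV_torsion_elt a) -> absolutely_w_pure A.
Proof.
move=> torA N [n [f [gens [f_surj ker_f]]]] E i p [_ [p_surj ker_p]].
have [L pL] := rV_lift f p_surj.
have gens_tor k : (k < size gens)%N -> contains_GV (fun r => r *: L gens`_k = 0).
  move=> lt_k; have /ker_p[a <-] : p (L gens`_k) = 0.
    rewrite pL; apply/ker_f; exists (fun j => (j == Ordinal lt_k)%:R).
    rewrite (bigD1 (Ordinal lt_k)) //= eqxx scale1r big1 ?addr0 // => j /negbTE->.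
    exact: scale0r.
  have [J [GVJ Ja]] := torA a.
  by exists J; split=> // r /Ja; rewrite -linearZ_LR => ->; rewrite linear0.
have [J [GVJ Jgens]] := contains_GV_all gens_tor.
exists J; split=> // r Jr.
have [|s sf] := linear_factor (h := r \*: L) f_surj.
  move=> v /ker_f[c ->]; rewrite /= linear_sum scaler_sumr big1 // => k _.
  by rewrite linearZ_LR scalerA mulrC -scalerA Jgens ?scaler0.
by exists s => y; have [v <-] := f_surj y; rewrite sf /= linearZ_LR pL.
Qed.

Section ShortExactSequences.
Variables (R : comPzRingType) (V E M : lmodType R).
Variables (i : {linear V -> E}) (p : {linear E -> M}).
Hypothesis ses_ip : ses i p.

Lemma ses_restrict (S : submodClosed V) (P : submodClosed E) :
  (forall v, (i v \in P) = (v \in S)) -> (forall m, exists2 e, e \in P & p e = m) ->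
  exists i' : {linear submod S -> submod P}, ses i' (p \o val).
Proof.
have [i_inj [_ ker_p]] := ses_ip; move=> PS P_surj.
have iP (t : submod S) : i (val t) \in P by rewrite PS (valP t).
have i'_lin : linear (fun t => Sub (i (val t)) (iP t) : submod P).
  by move=> a t t'; apply: val_inj; rewrite /= linearP.
exists (lin_pack i'_lin); split; [|split].
- by move=> t t' /(congr1 val); rewrite /= => /i_inj/val_inj.
- by move=> m; have [e Pe <-] := P_surj m; exists (Sub e Pe).
move=> z; split=> [/ker_p[v ivz]|[t <-]]; last by apply/ker_p; exists (val t).
have Sv : v \in S by rewrite -PS ivz (valP z).
by exists (Sub v Sv); apply: val_inj.
Qed.

(* [q] splits the extension modulo S; the pullback of [sigma] along [q] is then an
   extension of M by S, whose splitting splits p. *)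
Lemma split_via_pullback (Q : lmodType R) (q : {linear E -> Q}) (p' : {linear Q -> M})
    (sigma : {linear M -> Q}) (S : submodClosed V) :
  Ext1_zero M (submod S) ->
  (forall e, p' (q e) = p e) -> (forall m, p' (sigma m) = m) ->
  (forall y, exists e, q e = y) -> (forall v, (q (i v) == 0) = (v \in S)) ->
  exists s : {linear M -> E}, forall m, p (s m) = m.
Proof.
have [_ [_ ker_p]] := ses_ip; move=> ext_S p'E sigmaK q_surj qiS.
have [v|m|i' ses_i'] := @ses_restrict S (kerm (q \- (sigma \o p))).
- have piv0 : p (i v) = 0 by apply/ker_p; exists v.
  by rewrite inE /= piv0 linear0 subr0.
- have [e eE] := q_surj (sigma m); have pe : p e = m by rewrite -p'E eE sigmaK.
  by exists e; rewrite // inE /= pe eE subrr.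
have [tau tauK] := ext_S _ _ _ ses_i'.
by exists (val \o tau) => m; apply: tauK.
Qed.

Section ModImage.
Variable S : submodClosed V.
Local Notation N := (submod_img i S).

Lemma ses_quotmod : exists (i' : {linear quotmod S -> quotmod N})
    (p' : {linear quotmod N -> M}), ses i' p' /\ forall e, p' (\pi_(quotmod N) e) = p e.
Proof.
have [i_inj [p_surj ker_p]] := ses_ip.
have p_N e : e \in N -> p e = 0 by move=> /asboolP[v _ <-]; apply/ker_p; exists v.
have [|i' /= i'E] := linear_factor (h := \pi_(quotmod N) \o i) (@pi_surj _ _ S).
  by move=> v /eqP; rewrite pi_eq0 => Sv; apply/eqP; rewrite /= pi_eq0 mem_submod_img_inj.
have [|p' /= p'E] := linear_factor (h := p) (@pi_surj _ _ N).
  by move=> e /eqP; rewrite pi_eq0; apply: p_N.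
exists i', p'; split; last exact: p'E.
split; [|split].
- have i'_eq0 q : i' q = 0 -> q = 0.
    have [v <-] := pi_surj q; rewrite i'E => /eqP.
    by rewrite /= pi_eq0 mem_submod_img_inj // -pi_eq0 => /eqP.
  exact: raddf_inj i'_eq0.
- by move=> m; have [e <-] := p_surj m; exists (\pi e).
move=> q; have [e <-] := pi_surj q; rewrite p'E; split.
  by move=> /ker_p[v <-]; exists (\pi v); rewrite i'E.
move=> [q']; have [v <-] := pi_surj q'; rewrite i'E => /eqP.
rewrite -subr_eq0 -linearB pi_eq0 => /p_N /eqP; rewrite linearB subr_eq0 => /eqP <-.
by apply/ker_p; exists v.
Qed.

End ModImage.
End ShortExactSequences.

Section Projectivity.
Variables (R : comPzRingType) (M : lmodType R).

Lemma Ext1_zero_extension (V : lmodType R) (S : submodClosed V) :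
  Ext1_zero M (submod S) -> Ext1_zero M (quotmod S) -> Ext1_zero M V.
Proof.
move=> ext_S ext_VS E i p ses_ip.
have [i' [p' [ses_ip' p'E]]] := ses_quotmod ses_ip S.
have [sigma sigmaK] := ext_VS _ _ _ ses_ip'.
apply: (split_via_pullback ses_ip ext_S p'E sigmaK (@pi_surj _ _ _)) => v.
by rewrite pi_eq0 mem_submod_img_inj //; case: ses_ip.
Qed.

Lemma split_of_Ext1_zero (E : lmodType R) (p : {linear E -> M}) :
  Ext1_zero M (submod (kerm p)) -> (forall m, exists e, p e = m) ->
  exists s : {linear M -> E}, forall m, p (s m) = m.
Proof.
move=> ext_ker p_surj; apply: (ext_ker _ val); split; [exact: val_inj | split=> // e].
split=> [pe0|[k <-]]; last exact/eqP/(valP k).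
have ker_e : e \in kerm p by rewrite inE pe0.
by exists (Sub e ker_e).
Qed.

Lemma projective_of_split
  (split_M : forall (E : lmodType R) (p : {linear E -> M}), (forall m, exists e, p e = m) ->
     exists s : {linear M -> E}, forall m, p (s m) = m) :
  projective_module M.
Proof.
move=> B C g f g_surj; pose P := kerm ((g \o fst) \- (f \o snd)).
have [|s sK] := split_M (submod P) (snd \o val).
  move=> m; have [b gb] := g_surj (f m).
  have Pbm : (b, m) \in P by rewrite inE /= gb subrr.
  by exists (Sub (b, m) Pbm).
exists (fst \o val \o s) => m; have := valP (s m); rewrite inE subr_eq0 => /eqP /= ->.
by move: (sK m) => /= ->.
Qed.

End Projectivity.

Theorem proposition2p8 (R : comPzRingType) (M : lmodType R) :
  w_FP_projective M ->
  (forall G : lmodType R, GV_torsion_free G -> Ext1_zero M G) ->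
  projective_module M.
Proof.
move=> FP_M TF_M.
have Ext1_M (K : lmodType R) : Ext1_zero M K.
  apply: (@Ext1_zero_extension _ _ K (@GV_tor _ K)).
    exact/FP_M/GV_torsion_abs_w_pure/GV_torsion_submod.
  exact/TF_M/GV_torsion_free_quotmod.
apply: projective_of_split => E p; exact: split_of_Ext1_zero.
Qed.
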